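(* Fix a treatment group $d$, a post-treatment target age $a$, and a control group $d'$ with $d'>a\ge d$. Suppose the No Anticipation assumption holds for both genders $g\in\{f,m\}$ and both groups $d$ and $d'$, and suppose $$\frac{\gamma_{\mathrm{PT}}(f,d,d',a)}{APO(f,d,\infty,a)}=\frac{\gamma_{\mathrm{PT}}(m,d,d',a)}{APO(m,d,\infty,a)}.$$ Let $$P(d,a)=\frac{ATE(f,d,a)-ATE(m,d,a)}{APO(f,d,\infty,a)},\qquad \delta_P(d,d',a)=\frac{\delta_{\mathrm{ATE}}(f,d,d',a)-\delta_{\mathrm{ATE}}(m,d,d',a)}{\delta_{\mathrm{APO}}(f,d,d',a)}.$$ Then $$\delta_P(d,d',a)=P(d,a)\cdot\mathrm{Bias}_1(d,d',a)+\mathrm{Bias}_2(d,d',a),$$ where $$\mathrm{Bias}_1(d,d',a)=\frac{APO(f,d,\infty,a)}{APO(f,d,\infty,a)-\gamma_{\mathrm{PT}}(f,d,d',a)},\qquad \mathrm{Bias}_2(d,d',a)=\frac{\gamma_{\mathrm{PT}}(f,d,d',a)-\gamma_{\mathrm{PT}}(m,d,d',a)}{APO(f,d,\infty,a)-\gamma_{\mathrm{PT}}(f,d,d',a)}.$$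
   Context: Population of individuals with gender $G\in\{f,m\}$ and age at first childbirth $D$ (with $D=\infty$ meaning never). For each age $a$ and each (possibly counterfactual) first-birth age $d'\in\mathbb{N}\cup\{\infty\}$ there is a potential outcome (earnings) $Y_a(d')$; observed earnings satisfy consistency $Y_a=Y_a(D)$. Define $APO(g,d,d',a)=\mathbb{E}[Y_a(d')\mid G=g,D=d]$ and $ATE(g,d,a)=APO(g,d,d,a)-APO(g,d,\infty,a)$. Descriptive quantities: $\delta_{\mathrm{APO}}(g,d,d',a)=\mathbb{E}[Y_{d-1}\mid G=g,D=d]+\mathbb{E}[Y_a-Y_{d-1}\mid G=g,D=d']$, $\delta_{\mathrm{ATE}}(g,d,d',a)=\mathbb{E}[Y_a\mid G=g,D=d]-\delta_{\mathrm{APO}}(g,d,d',a)$. Parallel-trends violation: $\gamma_{\mathrm{PT}}(g,d,d',a)=APO(g,d,\infty,a)-APO(g,d,\infty,d-1)-[APO(g,d',\infty,a)-APO(g,d',\infty,d-1)]$. No Anticipation for gender $g$ and group $d$: $APO(g,d,d,b)=APO(g,d,\infty,b)$ for every age $b<d$. All denominators appearing are assumed nonzero. *)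

From HB Require Import structures.
From mathcomp Require Import all_boot all_order all_algebra.
From mathcomp Require Import all_classical all_reals all_analysis.
Set Implicit Arguments. Unset Strict Implicit. Unset Printing Implicit Defensive.
Import Order.TTheory GRing.Theory Num.Theory.
Local Open Scope classical_set_scope.
Local Open Scope ring_scope.

Inductive gender := female | male.

(* Ages and first-birth ages are integers; a first-birth group is an
   [option int], with [None] meaning "never" (D = infinity). *)

Section Defs.
Context {dT : measure_display} {T : measurableType dT} {R : realType}.
Variable (P : probability T R).

Definition cexp (X : T -> R) (A : set T) : R :=
  fine (\int[P]_(w in A) (X w)%:E) / fine (P A).

Variables (G : T -> gender) (D : T -> option int).

Definition grp (g : gender) (dd : option int) : set T :=
  [set w | G w = g /\ D w = dd].

(* Potential outcomes Y a d' and observed outcomes Yobs a. *)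
Variables (Y : int -> option int -> T -> R) (Yobs : int -> T -> R).

Definition APO (g : gender) (d d' : option int) (a : int) : R :=
  cexp (Y a d') (grp g d).

Definition ATE (g : gender) (d : int) (a : int) : R :=
  APO g (Some d) (Some d) a - APO g (Some d) None a.

Definition deltaAPO (g : gender) (d d' a : int) : R :=
  cexp (Yobs (d - 1)) (grp g (Some d))
  + cexp (fun w => Yobs a w - Yobs (d - 1) w) (grp g (Some d')).

Definition deltaATE (g : gender) (d d' a : int) : R :=
  cexp (Yobs a) (grp g (Some d)) - deltaAPO g d d' a.

Definition gammaPT (g : gender) (d d' a : int) : R :=
  APO g (Some d) None a - APO g (Some d) None (d - 1)
  - (APO g (Some d') None a - APO g (Some d') None (d - 1)).

Definition NoAnticipation (g : gender) (d : int) : Prop :=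
  forall b : int, b < d -> APO g (Some d) (Some d) b = APO g (Some d) None b.

End Defs.

From HB Require Import structures.
From mathcomp Require Import all_boot all_order all_algebra.
From mathcomp Require Import all_classical all_reals all_analysis.
From mathcomp Require Import ring.
Import Order.TTheory GRing.Theory Num.Theory.
Local Open Scope classical_set_scope.
Local Open Scope ring_scope.

(* Consistency and No Anticipation turn the descriptive quantities into
   potential-outcome ones: deltaAPO(g) = APO(g,d,oo,a) - gammaPT(g) and
   deltaATE(g) = ATE(g,d,a) + gammaPT(g), because before d (and, for the
   control group d', up to age a < d') observed earnings coincide in mean
   with the never-treated potential outcome.  The decomposition is then a
   field identity in these quantities. *)

Lemma eq_cexp (dT : measure_display) (T : measurableType dT) (R : realType)
  (P : probability T R) (X Z : T -> R) (A : set T) :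
  (forall w, A w -> X w = Z w) -> cexp P X A = cexp P Z A.
Proof.
move=> eqXZ; rewrite /cexp; congr (fine _ / _).
by apply: eq_integral => w; rewrite inE => /eqXZ ->.
Qed.

Lemma cexpB (dT : measure_display) (T : measurableType dT) (R : realType)
  (P : probability T R) (X Z : T -> R) (A : set T) :
  measurable A ->
  P.-integrable setT (fun w => (X w)%:E) -> P.-integrable setT (fun w => (Z w)%:E) ->
  cexp P (fun w => X w - Z w) A = cexp P X A - cexp P Z A.
Proof.
move=> mA iX iZ.
have iXA : P.-integrable A (EFin \o X) by apply: (integrableS measurableT mA).
have iZA : P.-integrable A (EFin \o Z) by apply: (integrableS measurableT mA).
rewrite /cexp -mulrBl; congr (_ / _).
rewrite (_ : (\int[P]_(w in A) (X w - Z w)%:E)%E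
          = (\int[P]_(w in A) ((X w)%:E - (Z w)%:E))%E) //.
by rewrite integralB_EFin // fineB //; exact: integrable_fin_num.
Qed.

Lemma bias_decomposition (R : fieldType) (te tm A gf gm : R) :
  A != 0 -> A - gf != 0 ->
  (te + gf - (tm + gm)) / (A - gf) = (te - tm) / A * (A / (A - gf)) + (gf - gm) / (A - gf).
Proof. by move=> A0 Agf0; field; apply/andP. Qed.

Section Identification.
Context {dT : measure_display} {T : measurableType dT} {R : realType}.
Variables (P : probability T R) (G : T -> gender) (D : T -> option int).
Variables (Y : int -> option int -> T -> R) (Yobs : int -> T -> R).
Hypothesis consistency : forall (b : int) (w : T), Yobs b w = Y b (D w) w.
Hypothesis measurable_grp : forall g dd, measurable (grp G D g dd).
Hypothesis integrable_Yobs : forall b, P.-integrable setT (fun w => (Yobs b w)%:E).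

Lemma cexp_Yobs_grp g (dd b : int) :
  cexp P (Yobs b) (grp G D g (Some dd)) = APO P G D Y g (Some dd) (Some dd) b.
Proof. by apply: eq_cexp => w [_ Dw]; rewrite consistency Dw. Qed.

Lemma deltaAPOE g (d d' a : int) :
  NoAnticipation P G D Y g d -> NoAnticipation P G D Y g d' ->
  d <= d' -> a < d' ->
  deltaAPO P G D Yobs g d d' a = APO P G D Y g (Some d) None a - gammaPT P G D Y g d d' a.
Proof.
move=> NAd NAd' le_dd' lt_ad'.
have lt_d1d : d - 1 < d by rewrite ltrBlDr ltrDl.
rewrite /deltaAPO cexpB // !cexp_Yobs_grp NAd // NAd' // NAd'; last first.
  exact: lt_le_trans le_dd'.
by rewrite /gammaPT; ring.
Qed.

Lemma deltaATEE g (d d' a : int) :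
  NoAnticipation P G D Y g d -> NoAnticipation P G D Y g d' ->
  d <= d' -> a < d' ->
  deltaATE P G D Yobs g d d' a = ATE P G D Y g d a + gammaPT P G D Y g d d' a.
Proof.
move=> NAd NAd' le_dd' lt_ad'.
by rewrite /deltaATE deltaAPOE // cexp_Yobs_grp /ATE; ring.
Qed.

End Identification.

Theorem lemma2 (dT : measure_display) (T : measurableType dT) (R : realType)
  (P : probability T R) (G : T -> gender) (D : T -> option int)
  (Y : int -> option int -> T -> R) (Yobs : int -> T -> R)
  (d d' a : int)
  (* consistency: Y_a = Y_a(D) *)
  (Hcons : forall (b : int) (w : T), Yobs b w = Y b (D w) w)
  (* regularity: the conditioning events are measurable, outcomes integrable *)
  (Hmeas : forall (g : gender) (dd : option int), measurable (grp G D g dd))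
  (Hint : forall (b : int) (dd : option int), P.-integrable setT (fun w => (Y b dd w)%:E))
  (HintO : forall b : int, P.-integrable setT (fun w => (Yobs b w)%:E))
  (* conditioning events have nonzero probability *)
  (HPd : forall g : gender, P (grp G D g (Some d)) != 0%E)
  (HPd' : forall g : gender, P (grp G D g (Some d')) != 0%E)
  (* ages: d' > a >= d *)
  (Hda : d <= a) (Had' : a < d')
  (* No Anticipation for both genders and both groups d, d' *)
  (HNA : forall g : gender, NoAnticipation P G D Y g d /\ NoAnticipation P G D Y g d')
  (* nonzero denominators *)
  (HAf : APO P G D Y female (Some d) None a != 0)
  (HAm : APO P G D Y male (Some d) None a != 0)
  (HB : APO P G D Y female (Some d) None a - gammaPT P G D Y female d d' a != 0)
  (HdA : deltaAPO P G D Yobs female d d' a != 0)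
  (* proportional parallel-trends violations *)
  (Hratio : gammaPT P G D Y female d d' a / APO P G D Y female (Some d) None a
          = gammaPT P G D Y male d d' a / APO P G D Y male (Some d) None a) :
  let Pda := (ATE P G D Y female d a - ATE P G D Y male d a)
             / APO P G D Y female (Some d) None a in
  let deltaP := (deltaATE P G D Yobs female d d' a - deltaATE P G D Yobs male d d' a)
                / deltaAPO P G D Yobs female d d' a in
  let Bias1 := APO P G D Y female (Some d) None a
               / (APO P G D Y female (Some d) None a - gammaPT P G D Y female d d' a) in
  let Bias2 := (gammaPT P G D Y female d d' a - gammaPT P G D Y male d d' a)
               / (APO P G D Y female (Some d) None a - gammaPT P G D Y female d d' a) in
  deltaP = Pda * Bias1 + Bias2.
Proof.
move=> Pda deltaP Bias1 Bias2.
have le_dd' : d <= d' by rewrite ltW // (le_lt_trans Hda).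
have [NAfd NAfd'] := HNA female; have [NAmd NAmd'] := HNA male.
rewrite /deltaP /Pda /Bias1 /Bias2.
rewrite !(deltaATEE P G D Y Yobs) // (deltaAPOE P G D Y Yobs) //.
exact: bias_decomposition.
Qed.
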